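(* Let $X$ be a separable Hilbert space over $K$ with orthonormal basis $\{e_j\}_{j=1,2,\ldots}\cup\{e_i^*\}_{i=1,2,\ldots}$, and let $Z$ be the proper closed subspace of $X$ with orthonormal basis $\{e_j\}$. Let $p:X\to\mathbb{R}$ be a uniformly continuous sub-additive functional with $p(0)=0$, and let $F:Z\to\mathbb{R}$ be a continuous functional with $F(0)=0$ such that $F(z_1)+F(z_2)\le p(z_1+z_2)$ for all orthogonal vectors $z_1,z_2$ lying in the union of the one-dimensional subspaces spanned by the individual $e_j$. Then there exists a continuous functional $\hat F:X\to\mathbb{R}$ with $\hat F(z)=F(z)$ for $z\in Z$ and $\hat F(x_1)+\hat F(x_2)\le p(x_1+x_2)$ for all orthogonal vectors $x_1,x_2$ lying in the union of the one-dimensional subspaces spanned by the individual $e_j$ or $e_i^*$.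
   Context: $K$ is $\mathbb{R}$ or $\mathbb{C}$. A functional $p$ is sub-additive if $p(x+y)\le p(x)+p(y)$ for all $x,y$. *)

From HB Require Import structures.
From mathcomp Require Import all_boot all_order all_algebra.
From mathcomp Require Import all_classical all_reals all_analysis.
From mathcomp Require Import complex.
Set Implicit Arguments. Unset Strict Implicit. Unset Printing Implicit Defensive.
Import Order.TTheory GRing.Theory Num.Theory.
Import numFieldNormedType.Exports.
Local Open Scope classical_set_scope.
Local Open Scope ring_scope.

(* [ip] is an inner product on the normed space X over K (with conjugation
   [conjK]: the identity for K = R, complex conjugation for K = C), linear in
   the first argument, conjugate-symmetric, and inducing the norm of X.
   Together with completeness of X this makes X a Hilbert space. *)
Definition inner_product (K : numFieldType) (conjK : K -> K)
    (X : normedModType K) (ip : X -> X -> K) : Prop :=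
  [/\ forall (a : K) (x1 x2 y : X), ip (a *: x1 + x2) y = a * ip x1 y + ip x2 y,
      forall x y : X, ip y x = conjK (ip x y)
    & forall x : X, `|x| ^+ 2 = ip x x].

Definition lspan (K : numFieldType) (X : normedModType K) (I : Type)
    (e : I -> X) : set X :=
  [set x | exists (s : seq I) (c : I -> K), x = \sum_(i <- s) c i *: e i].

Definition clspan (K : numFieldType) (X : normedModType K) (I : Type)
    (e : I -> X) : set X := closure (lspan e).

Definition orthonormal_basis (K : numFieldType) (X : normedModType K)
    (ip : X -> X -> K) (I : Type) (e : I -> X) : Prop :=
  [/\ forall i, ip (e i) (e i) = 1,
      forall i j, i <> j -> ip (e i) (e j) = 0
    & clspan e = setT].

Definition on_lines (K : numFieldType) (X : normedModType K) (I : Type)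
    (e : I -> X) : set X :=
  [set x | exists (i : I) (c : K), x = c *: e i].

Definition join_basis (T : Type) (e es : nat -> T) (k : nat + nat) : T :=
  match k with inl j => e j | inr i => es i end.

Definition theorem5_stmt (K : numFieldType) (conjK : K -> K) (R : realType)
    : Prop :=
  forall (X : completeNormedModType K) (ip : X -> X -> K),
  inner_product conjK ip ->
  forall e es : nat -> X,
  orthonormal_basis ip (join_basis e es) ->
  forall p : X -> R,
  unif_continuous p ->
  (forall x y : X, p (x + y) <= p x + p y) ->
  p 0 = 0 ->
  forall F : X -> R,   (* only its values on Z = clspan e matter *)
  {within clspan e, continuous F} ->
  F 0 = 0 ->
  (forall z1 z2 : X, on_lines e z1 -> on_lines e z2 -> ip z1 z2 = 0 ->
     F z1 + F z2 <= p (z1 + z2)) ->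
  exists Fh : X -> R,
    [/\ continuous Fh,
        forall z : X, clspan e z -> Fh z = F z
      & forall x1 x2 : X, on_lines (join_basis e es) x1 ->
          on_lines (join_basis e es) x2 -> ip x1 x2 = 0 ->
          Fh x1 + Fh x2 <= p (x1 + x2)].

From HB Require Import structures.
From mathcomp Require Import all_boot all_order all_algebra.
From mathcomp Require Import all_classical all_reals all_analysis.
From mathcomp Require Import complex.
From mathcomp Require Import ring lra.
Set Implicit Arguments.
Unset Strict Implicit.
Unset Printing Implicit Defensive.
Import Order.TTheory GRing.Theory Num.Theory.
Import numFieldNormedType.Exports.
Local Open Scope classical_set_scope.
Local Open Scope ring_scope.

(* Extend F from the closed subspace Z to a continuous G on X by Tietze's
   theorem (X is metric, hence normal).  Then bend G down towards
   q x := - p (- x) on the lines of the e_i^*: the weight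
   w x := d(x, Z) / |x| vanishes on Z and equals 1 on those lines, which are
   orthogonal to Z, and Fh := G + w (min(G, q) - G) is continuous even at 0,
   where w jumps, because G 0 = q 0 = 0.  Subadditivity and p 0 = 0 give
   p x - p (- y) <= p (x + y) and - p (- y) <= p y, which settles every pair
   involving a line of some e_i^*; pairs of lines of the e_j are the
   hypothesis on F. *)

Lemma unif_continuous_continuous (U V : uniformType) (f : U -> V) :
  unif_continuous f -> continuous f.
Proof.
move=> uf x A; rewrite -!nbhs_entourageE => -[B entB BA].
exists ((fun xy => (f xy.1, f xy.2)) @^-1` B); first exact: uf.
by move=> y /= Bxy; apply: BA.
Qed.

Section shrink.
Context {R : realType}.

Definition shrink (t : R) := t / (1 + `|t|).
Definition unshrink (s : R) := s / (1 - `|s|).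


Lemma shrink_lt1 t : `|shrink t| < 1.
Proof.
rewrite /shrink normrM normfV [`|1 + _|]gtr0_norm //.
by rewrite ltr_pdivrMr // mul1r ltrDr.
Qed.

Lemma shrinkK : cancel shrink unshrink.
Proof.
move=> t; rewrite /unshrink /shrink normrM normfV [`|1 + _|]gtr0_norm //.
have -> : 1 - `|t| / (1 + `|t|) = (1 + `|t|)^-1.
  by field; rewrite gt_eqF.
by rewrite invrK divfK // gt_eqF.
Qed.

Lemma continuous_shrink : continuous shrink.
Proof.
move=> t; apply: cvgM; first exact: cvg_id.
apply: cvgV; first by rewrite gt_eqF.
by apply: cvgD; [exact: cvg_cst | exact: cvg_norm].
Qed.

Lemma continuous_unshrink s : `|s| < 1 -> {for s, continuous unshrink}.
Proof.
move=> s1; apply: cvgM; first exact: cvg_id.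
apply: cvgV; first by rewrite subr_eq0 eq_sym lt_eqF.
by apply: cvgB; [exact: cvg_cst | exact: cvg_norm].
Qed.

End shrink.

(* Extend [shrink \o f] with values in [-1, 1], then multiply by an Urysohn
   function that is 1 on [A] and 0 where the extension reaches -1 or 1, so
   that [unshrink] can be applied. *)
Lemma continuous_extension {X : topologicalType} {R : realType}
    (A : set X) (f : X -> R) :
  normal_space X -> closed A -> {within A, continuous f} ->
  exists g : X -> R, continuous g /\ {in A, f =1 g}.
Proof.
move=> nX cA cf.
have cf' : {within A, continuous (shrink \o f)}.
  move=> x; apply: (@continuous_comp (subspace A)); first exact: cf.
  exact: continuous_shrink.
have [g [fg cg g1]] := continuous_bounded_extension nX cA ltr01 cf'
  (fun x _ => ltW (shrink_lt1 (f x))).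
pose B := (fun x => `|g x|) @^-1` [set r : R | r = 1].
have cB : closed B.
  by apply: preimage_closed (@closed_eq _ 1) => x _; exact: cvg_norm (cg x).
have gA x : A x -> g x = shrink (f x) by move=> Ax; rewrite -fg ?inE.
have BA0 : B `&` A = set0.
  apply/seteqP; split => // x [/= Bx /gA gx].
  by have := shrink_lt1 (f x); rewrite -gx Bx ltxx.
have [u [cu uB uA u01]] := urysohn_ext_itv nX cB cA BA0 (@ltr01 R).
have ug_lt1 x : `|u x * g x| < 1.
  have [Bx|nBx] := pselect (B x).
    by rewrite (_ : u x = 0) ?mul0r ?normr0 //; apply: uB; exists x.
  have /andP[u0 u1] : 0 <= u x <= 1.
    by have := u01 (u x) (ex_intro2 _ _ x I erefl) => /=; rewrite in_itv.
  rewrite normrM ger0_norm // (le_lt_trans (ler_piMl _ u1)) //.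
  by rewrite lt_neqAle g1 andbT; apply/eqP.
exists (unshrink \o (fun x => u x * g x)); split.
  move=> x; apply: continuous_comp; last exact: continuous_unshrink.
  exact: cvgM (cu x) (cg x).
move=> x /[!inE] Ax /=.
by rewrite gA // (_ : u x = 1) ?mul1r ?shrinkK //; apply: uA; exists x.
Qed.

(* The norm of X is K-valued and K = C is not totally ordered, so distances
   are read in R through [toR], a left inverse on the nonnegative elements of
   K of the order embedding [iota] of R into K (both are the identity for
   K = R; for K = C they are [r |-> r%:C] and [Re]). *)
Section real_norm.
Context {K : numFieldType} {R : realType} (iota : {additive R -> K})
  (toR : K -> R).
Hypotheses (iota_mono : {mono iota : x y / x <= y})
  (toRK : forall k, 0 <= k -> iota (toR k) = k).
Context {X : normedModType K}.

Let iota_lt : {mono iota : x y / x < y} := leW_mono iota_mono.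

Definition rnorm (x : X) : R := toR `|x|.

Lemma iota_rnorm x : iota (rnorm x) = `|x|.
Proof. exact/toRK/normr_ge0. Qed.

Lemma rnorm_ge0 x : 0 <= rnorm x.
Proof. by rewrite -iota_mono raddf0 iota_rnorm. Qed.

Lemma rnorm0 : rnorm 0 = 0.
Proof. by apply: (inc_inj iota_mono); rewrite iota_rnorm normr0 raddf0. Qed.

Lemma rnorm_eq0 x : rnorm x = 0 -> x = 0.
Proof. by move=> x0; apply/normr0_eq0; rewrite -iota_rnorm x0 raddf0. Qed.

Lemma rnorm_le x y : `|x| <= `|y| -> rnorm x <= rnorm y.
Proof. by rewrite -iota_mono !iota_rnorm. Qed.

Lemma rnormD x y : rnorm (x + y) <= rnorm x + rnorm y.
Proof. by rewrite -iota_mono raddfD !iota_rnorm ler_normD. Qed.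

Lemma rnormB x y : rnorm (x - y) = rnorm (y - x).
Proof. by rewrite /rnorm distrC. Qed.

Lemma nbhs_rnormP x (A : set X) :
  nbhs x A <-> exists2 r : R, 0 < r & forall y, rnorm (x - y) < r -> A y.
Proof.
rewrite nbhs_ballP; split => [[e e0 eA]|[r r0 rA]].
  exists (toR e) => [|y xy]; first by rewrite -iota_lt raddf0 toRK ?ltW.
  by apply: eA; rewrite -ball_normE /= -iota_rnorm -(toRK (ltW e0)) iota_lt.
exists (iota r) => [|y]; first by rewrite /= -(raddf0 iota) iota_lt.
by rewrite -ball_normE /= -iota_rnorm iota_lt; exact: rA.
Qed.

Lemma rnorm_lipschitz_continuous (f : X -> R) :
  (forall x y, f x <= rnorm (x - y) + f y) -> continuous f.
Proof.
move=> fL x; apply/cvgrPdist_lt => e e0; apply/nbhs_rnormP.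
exists e => // y xy; have := fL x y; have := fL y x.
by rewrite rnormB ltr_norml; lra.
Qed.

Lemma continuous_rnorm : continuous rnorm.
Proof.
by apply: rnorm_lipschitz_continuous => x y; rewrite -{1}(subrK y x) rnormD.
Qed.

Lemma rnorm_le_closure (A : set X) y :
  (forall z, A z -> `|y| <= `|y - z|) ->
  forall z, closure A z -> rnorm y <= rnorm (y - z).
Proof.
move=> Ay; rewrite closureE; apply: smallest_sub; last first.
  by move=> z /Ay; exact: rnorm_le.
apply: preimage_closed (@closed_ge _ _) => z _.
apply: rnorm_lipschitz_continuous => {}z z'.
have -> : y - z = (z' - z) + (y - z') by rewrite [RHS]addrC addrA subrK.
by rewrite (rnormB z) rnormD.
Qed.

Definition dist (A : set X) (x : X) : R := inf [set rnorm (x - a) | a in A].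

Lemma dist_ge0 A x : 0 <= dist A x.
Proof.
have [->|/set0P[a Aa]] := eqVneq A set0; first by rewrite /dist image_set0 inf0.
apply: lb_le_inf => [|_ [b _ <-]]; last exact: rnorm_ge0.
by exists (rnorm (x - a)), a.
Qed.

Lemma dist_le A x a : A a -> dist A x <= rnorm (x - a).
Proof.
move=> Aa; apply: ge_inf; last by exists a.
by exists 0 => _ [b _ <-]; exact: rnorm_ge0.
Qed.

Lemma dist_eq0 A x : A x -> dist A x = 0.
Proof.
move=> Ax; apply/le_anti; rewrite dist_ge0 andbT.
by rewrite (le_trans (dist_le x Ax)) // subrr rnorm0.
Qed.

Lemma dist_lipschitz A x y : dist A x <= rnorm (x - y) + dist A y.
Proof.
have [->|/set0P[a0 Aa0]] := eqVneq A set0.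
  by rewrite /dist !image_set0 inf0 addr0 rnorm_ge0.
rewrite -lerBlDl; apply: lb_le_inf => [|_ [a Aa <-]].
  by exists (rnorm (y - a0)), a0.
rewrite lerBlDl (le_trans (dist_le x Aa)) //.
by rewrite -{1}(subrK y x) -addrA rnormD.
Qed.

Lemma continuous_dist A : continuous (dist A).
Proof. exact/rnorm_lipschitz_continuous/dist_lipschitz. Qed.

Lemma dist_gt0 A x : closed A -> A !=set0 -> ~ A x -> 0 < dist A x.
Proof.
move=> cA A0 nAx; rewrite lt_neqAle dist_ge0 andbT; apply: contra_notN nAx.
move=> /eqP/esym dA0; rewrite ((closure_id A).1 cA) => B /nbhs_rnormP[r r0 rB].
have dAr : dist A x < r by rewrite dA0.
have [_ [a Aa <-] xar] := inf_lt (image_nonempty _ A0) dAr.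
by exists a; split => //; exact: rB.
Qed.

Lemma rnorm_normal : normal_space X.
Proof.
apply/(@normal_openP R) => A B cA cB AB0.
have [->|/set0P A0] := eqVneq A set0.
  by exists set0, setT; split; rewrite ?set0I //; [exact: open0 | exact: openT].
have [->|/set0P B0] := eqVneq B set0.
  by exists setT, set0; split; rewrite ?setI0 //; [exact: openT | exact: open0].
have closer_open (C D : set X) : open [set x | dist C x < dist D x].
  have -> : [set x | dist C x < dist D x] =
      (fun x => dist D x - dist C x) @^-1` [set r | 0 < r].
    by apply/seteqP; split => x /=; rewrite subr_gt0.
  apply: open_comp; last exact: open_gt.
  by move=> x _; apply: cvgB; exact: continuous_dist.
have disj x : A x -> ~ B x by move=> Ax Bx; rewrite -[False]/(set0 x) -AB0.
exists [set x | dist A x < dist B x], [set x | dist B x < dist A x]; split.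
- exact: closer_open.
- exact: closer_open.
- by move=> x Ax /=; rewrite dist_eq0 // dist_gt0 //; exact: disj.
- by move=> x Bx /=; rewrite dist_eq0 // dist_gt0 // => /disj; apply.
- by apply/seteqP; split => x // [/= /lt_trans/[apply]]; rewrite ltxx.
Qed.

Lemma dist_eq_rnorm A x : A 0 -> (forall a, A a -> rnorm x <= rnorm (x - a)) ->
  dist A x = rnorm x.
Proof.
move=> A0 xA; apply/le_anti/andP; split; first by rewrite -{2}(subr0 x) dist_le.
by apply: lb_le_inf => [|_ [a Aa <-]]; [exists (rnorm (x - 0)), 0 | exact: xA].
Qed.

Lemma continuous_bend_below (Z E : set X) (G q : X -> R) :
  Z 0 -> (forall x z, E x -> Z z -> rnorm x <= rnorm (x - z)) ->
  continuous G -> continuous q -> G 0 = q 0 ->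
  exists H : X -> R, [/\ continuous H, forall z, Z z -> H z = G z
    & forall x, E x -> H x <= q x].
Proof.
move=> Z0 EZ cG cq Gq0.
pose w x := dist Z x / rnorm x.
pose D x := (G \min q) x - G x.
have w01 x : 0 <= w x <= 1.
  have [x0|x0] := eqVneq (rnorm x) 0.
    by rewrite /w x0 invr0 mulr0 lexx ler01.
  have rx : 0 < rnorm x by rewrite lt_neqAle eq_sym x0 rnorm_ge0.
  rewrite divr_ge0 ?dist_ge0 ?rnorm_ge0 //= ler_pdivrMr // mul1r.
  by rewrite -{2}(subr0 x) dist_le.
have cD : continuous D.
  by move=> x; apply: cvgB; [exact: continuous_min (cG x) (cq x) | exact: cG].
have D0 : D 0 = 0 by rewrite /D /= Gq0 minxx subrr.
exists (fun x => G x + w x * D x); split.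
- move=> x; apply: cvgD; first exact: cG.
  have [->|x0] := eqVneq x 0.
    rewrite D0 mulr0; apply/cvgr0Pnorm_le => e e0.
    have /cvgr0_norm_le/(_ e e0) : D @ (0 : X) --> (0 : R).
      by rewrite -D0; exact: cD.
    apply: filterS => y Dy; rewrite normrM (le_trans _ Dy) // ler_piMl //.
    by have /andP[w0 w1] := w01 y; rewrite ger0_norm.
  apply: cvgM; last exact: cD.
  apply: cvgM; first exact: continuous_dist.
  apply: cvgV; last exact: continuous_rnorm.
  by apply: contra_neq x0; exact: rnorm_eq0.
- by move=> z Zz; rewrite /w dist_eq0 // mul0r mul0r addr0.
- move=> x Ex; have [->|x0] := eqVneq x 0; first by rewrite D0 mulr0 addr0 Gq0.
  have -> : w x = 1.
    rewrite /w dist_eq_rnorm ?divff //; last by move=> z; exact: EZ.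
    by apply: contra_neq x0; exact: rnorm_eq0.
  by rewrite mul1r addrC subrK /= ge_min lexx orbT.
Qed.

End real_norm.

Section inner_product.
Context {K : numFieldType} (conjK : K -> K) {X : normedModType K}
  (ip : X -> X -> K).
Hypothesis ipX : inner_product conjK ip.

Lemma ipDl x1 x2 y : ip (x1 + x2) y = ip x1 y + ip x2 y.
Proof.
by case: ipX => lin _ _; have := lin 1 x1 x2 y; rewrite scale1r mul1r.
Qed.

Lemma ip0l y : ip 0 y = 0.
Proof. by apply: (addrI (ip 0 y)); rewrite -ipDl !addr0. Qed.

Lemma ipZl a x y : ip (a *: x) y = a * ip x y.
Proof.
by case: ipX => lin _ _; have := lin a x 0 y; rewrite !addr0 ip0l addr0.
Qed.

Lemma ipC x y : ip y x = conjK (ip x y).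
Proof. by case: ipX. Qed.

Lemma ip_normr x : `|x| ^+ 2 = ip x x.
Proof. by case: ipX. Qed.

Lemma conjK0 : conjK 0 = 0.
Proof. by rewrite -(ip0l 0) -ipC. Qed.

Lemma ip0r x : ip x 0 = 0.
Proof. by rewrite ipC ip0l conjK0. Qed.

Lemma pythagoras x y : ip x y = 0 -> `|x + y| ^+ 2 = `|x| ^+ 2 + `|y| ^+ 2.
Proof.
move=> xy; have yx : ip y x = 0 by rewrite ipC xy conjK0.
rewrite !ip_normr ipDl [ip x _]ipC [ip y _]ipC !ipDl xy yx addr0 add0r.
by rewrite -!ipC.
Qed.

Lemma ip_lspanl (I : Type) (e : I -> X) y :
  (forall i, ip (e i) y = 0) -> forall z, lspan e z -> ip z y = 0.
Proof.
move=> ey _ [s [c ->]]; elim: s => [|i s IH]; first by rewrite big_nil ip0l.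
by rewrite big_cons ipDl ipZl ey IH mulr0 addr0.
Qed.

Lemma normr_le_normB_lspan (I : Type) (e : I -> X) y :
  (forall i, ip (e i) y = 0) -> forall z, lspan e z -> `|y| <= `|y - z|.
Proof.
move=> ey z ez; have zy : ip (- z) y = 0.
  by rewrite -scaleN1r ipZl (ip_lspanl ey ez) mulr0.
rewrite -ler_sqr ?nnegrE // addrC pythagoras // lerDr.
exact: exprn_ge0.
Qed.

End inner_product.

Section subadditive.
Context {V : zmodType} {R : numDomainType} (p : V -> R).
Hypotheses (p_subadd : forall x y, p (x + y) <= p x + p y) (p0 : p 0 = 0).

Lemma subadd_lowerB x y : p x - p (- y) <= p (x + y).
Proof. by rewrite lerBlDr; have := p_subadd (x + y) (- y); rewrite addrK. Qed.

Lemma subadd_lowerN x : - p (- x) <= p x.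
Proof. by have := subadd_lowerB 0 x; rewrite p0 sub0r add0r. Qed.

Lemma subadd_pair_le (f : V -> R) (A B : set V) :
  (forall a, A a -> f a <= p a) -> (forall b, B b -> f b <= - p (- b)) ->
  forall x y, (A `|` B) x -> B y -> f x + f y <= p (x + y).
Proof.
move=> fA fB x y ABx By; apply: le_trans (subadd_lowerB x y).
apply: lerD (fB y By).
by case: ABx => [/fA // | /fB/le_trans]; apply; exact: subadd_lowerN.
Qed.

End subadditive.

Section lines.
Context {K : numFieldType} {X : normedModType K}.

Lemma on_lines_join (e es : nat -> X) x :
  on_lines (join_basis e es) x -> (on_lines e `|` on_lines es) x.
Proof. by move=> [[j|i] [c ->]]; [left; exists j, c | right; exists i, c]. Qed.

Lemma on_lines_clspan (I : Type) (e : I -> X) x : on_lines e x -> clspan e x.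
Proof.
move=> [i [c ->]]; apply: subset_closure.
by exists [:: i], (fun=> c); rewrite big_seq1.
Qed.

End lines.

Section theorem5.
Context {K : numFieldType} (conjK : K -> K) {R : realType}
  (iota : {additive R -> K}) (toR : K -> R).
Hypotheses (iota_mono : {mono iota : x y / x <= y})
  (toRK : forall k, 0 <= k -> iota (toR k) = k).

Lemma theorem5_gen : theorem5_stmt conjK R.
Proof.
move=> X ip ipX e es [_ orth _] p /unif_continuous_continuous cp p_subadd p0
  F cF F0 Fhyp.
have line0 : on_lines e 0 by exists 0%N, 0; rewrite scale0r.
have Z0 : clspan e 0 by exact: on_lines_clspan.
have [G [cG FG]] := continuous_extension (rnorm_normal iota_mono toRK)
  (@closed_closure _ _) cF.
have FGZ z : clspan e z -> F z = G z by move=> ez; apply: FG; rewrite inE.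
have perp x z : on_lines es x -> clspan e z -> rnorm toR x <= rnorm toR (x - z).
  move=> [i [c ->]]; apply: (rnorm_le_closure iota_mono toRK).
  apply: (normr_le_normB_lspan ipX) => j.
  by rewrite (ipC ipX) (ipZl ipX) (orth (inr i) (inl j)) // mulr0 (conjK0 ipX).
have cq : continuous (fun x => - p (- x)).
  move=> x; apply: cvgN; apply: (@continuous_comp _ _ _ -%R p); last exact: cp.
  exact: (cvgN cvg_id).
have Gq0 : G 0 = - p (- 0) by rewrite -FGZ // F0 oppr0 p0 oppr0.
have [Fh [cFh FhG FhE]] :=
  continuous_bend_below iota_mono toRK Z0 perp cG cq Gq0.
have FhF z : clspan e z -> Fh z = F z by move=> ez; rewrite FhG // FGZ.
have Fh_le_p x : on_lines e x -> Fh x <= p x.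
  move=> ex; rewrite (FhF _ (on_lines_clspan ex)).
  by have := Fhyp x 0 ex line0 (ip0r ipX x); rewrite F0 !addr0.
have Fh_pair := subadd_pair_le p_subadd p0 Fh_le_p FhE.
exists Fh; split=> // x1 x2 /on_lines_join[l1|l1] /on_lines_join[l2|l2] x12.
- by rewrite (FhF _ (on_lines_clspan l1)) (FhF _ (on_lines_clspan l2)) Fhyp.
- exact: Fh_pair (or_introl l1) l2.
- by rewrite addrC [x1 + x2]addrC; exact: Fh_pair (or_introl l2) l1.
- exact: Fh_pair (or_intror l1) l2.
Qed.

End theorem5.

Theorem theorem5 (R : realType) :
  theorem5_stmt (fun x : R => x) R /\
  theorem5_stmt (fun z : R[i] => z^*) R.
Proof.
split; first exact: (theorem5_gen (iota := idfun) (toR := idfun)).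
apply: (theorem5_gen (iota := real_complex R) (toR := @complex.Re R))
  => [x y|k]; first exact: lecR.
by case: k => a b; rewrite lecE /= => /andP[/eqP -> _].
Qed.
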